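(* Let $\mathbf{k}$ be an algebraically closed field, $G=\mathrm{GL}_n$, $M=\mathbf{k}^n$ the natural module, $\underline{G}=G\ltimes M$ and $\underline{\mathfrak{g}}=\mathrm{Lie}(\underline{G})=\mathfrak{gl}_n\times M$. For $(X,w)\in\underline{\mathcal{N}}$ let $\underline{\mathfrak{g}}_{(X,w)}=\{(Y,u)\in\underline{\mathfrak{g}}: [(X,w),(Y,u)]=0\}$ and $\underline{G}_{(X,w)}=\{(g,v)\in\underline{G}:\mathrm{Ad}(g,v)(X,w)=(X,w)\}$. Then (1) $\underline{\mathfrak{g}}_{(X,w)}=\mathrm{Lie}(\underline{G}_{(X,w)})$, and (2) $\underline{G}_{(X,w)}$ is connected.
   Context: $\underline{G}$ is $G\times M$ with product $(g_1,v_1)(g_2,v_2)=(g_1g_2,g_1v_2+v_1)$; the bracket on $\mathfrak{gl}_n\times M$ is $[(X_1,v_1),(X_2,v_2)]=([X_1,X_2],X_1v_2-X_2v_1)$; the adjoint action is $\mathrm{Ad}(g,v)(X,w)=(gXg^{-1},-(gXg^{-1})v+gw)$. $\underline{\mathcal{N}}=\mathcal{N}\times M$ with $\mathcal{N}$ the nilpotent cone of $\mathfrak{gl}_n$. *)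

From HB Require Import structures.
From mathcomp Require Import all_boot all_order all_algebra.
From mathcomp Require Import mpoly.
Set Implicit Arguments. Unset Strict Implicit. Unset Printing Implicit Defensive.
Import GRing.Theory.
Local Open Scope ring_scope.

(* The ambient affine space of the semidirect product  GL_n x| k^n  and of its
   Lie algebra  gl_n x k^n  is  'M[K]_n * 'cV[K]_n  =  k^(n*n + n). *)
Definition coord (K : fieldType) (n : nat) (p : 'M[K]_n * 'cV[K]_n)
  : 'I_(n * n + n) -> K :=
  fun i => match split i with
           | inl k => mxvec p.1 0 k
           | inr k => p.2 k 0
           end.

Definition nilpotent_mx (K : fieldType) (n : nat) (X : 'M[K]_n) : Prop :=
  exists m : nat, X ^+ m = 0.

Definition in_Gu (K : fieldType) (n : nat) (p : 'M[K]_n * 'cV[K]_n) : Prop :=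
  p.1 \in unitmx.

Definition Adu (K : fieldType) (n : nat) (gv Xw : 'M[K]_n * 'cV[K]_n)
  : 'M[K]_n * 'cV[K]_n :=
  let gXg := gv.1 *m Xw.1 *m invmx gv.1 in
  (gXg, - (gXg *m gv.2) + gv.1 *m Xw.2).

Definition bracketu (K : fieldType) (n : nat) (a b : 'M[K]_n * 'cV[K]_n)
  : 'M[K]_n * 'cV[K]_n :=
  (a.1 *m b.1 - b.1 *m a.1, a.1 *m b.2 - b.1 *m a.2).

Definition centu (K : fieldType) (n : nat) (Xw : 'M[K]_n * 'cV[K]_n)
  : 'M[K]_n * 'cV[K]_n -> Prop :=
  fun Yu => bracketu Xw Yu = 0.

Definition stabu (K : fieldType) (n : nat) (Xw : 'M[K]_n * 'cV[K]_n)
  : 'M[K]_n * 'cV[K]_n -> Prop :=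
  fun gv => in_Gu gv /\ Adu gv Xw = Xw.

Definition vanishing (K : fieldType) (n : nat) (S : 'M[K]_n * 'cV[K]_n -> Prop)
  (f : {mpoly K[n * n + n]}) : Prop :=
  forall p, S p -> f.@[coord p] = 0.

(* For a closed subgroup
   H of the group G x| M (a principal open in the ambient affine space), its
   tangent space at the identity (1,0) is Lie(H). *)
Definition tangent (K : fieldType) (n : nat) (S : 'M[K]_n * 'cV[K]_n -> Prop)
  (p : 'M[K]_n * 'cV[K]_n) : 'M[K]_n * 'cV[K]_n -> Prop :=
  fun Yu => forall f, vanishing S f ->
    \sum_(i < n * n + n) (f^`M(i)).@[coord p] * coord Yu i = 0.

Definition Lie_sub (K : fieldType) (n : nat) (H : 'M[K]_n * 'cV[K]_n -> Prop)
  : 'M[K]_n * 'cV[K]_n -> Prop := tangent H (1%:M, 0).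

(* Zariski-closed subsets of S (subspace topology from the ambient affine
   space; for S contained in G x| M this is the Zariski topology of S). *)
Definition zclosed_in (K : fieldType) (n : nat) (S A : 'M[K]_n * 'cV[K]_n -> Prop)
  : Prop :=
  exists F : {mpoly K[n * n + n]} -> Prop,
    forall p, A p <-> (S p /\ forall f, F f -> f.@[coord p] = 0).

Definition zconnected (K : fieldType) (n : nat) (S : 'M[K]_n * 'cV[K]_n -> Prop)
  : Prop :=
  forall A B, zclosed_in S A -> zclosed_in S B ->
    (forall p, S p <-> (A p \/ B p)) ->
    (forall p, ~ (A p /\ B p)) ->
    (forall p, ~ A p) \/ (forall p, ~ B p).

From Pilot Require Import Defs.
From HB Require Import structures.
From mathcomp Require Import all_boot all_order all_algebra.
From mathcomp Require Import mpoly.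
From Stdlib Require Import Classical.
Set Implicit Arguments. Unset Strict Implicit. Unset Printing Implicit Defensive.
Import GRing.Theory.
Local Open Scope ring_scope.
(* [vector] also exports a [coord]. *)
Local Notation coord := Defs.coord.

(* Since Ad(g,v) is linear in (g,v) once g commutes with X, the condition
   Ad(g,v)(X,w) = (X,w) says exactly that (g,v) - (1,0) lies in the
   centralizer g_(X,w).  So the stabilizer is the affine space
   (1,0) + g_(X,w) minus the hypersurface det g = 0.  A line through two of
   its points meets it in the complement of the finitely many roots of
   t |-> det (g + t h), a dense open subset of the line: no polynomial can
   vanish there without vanishing on the whole line.  This gives
   connectedness, and, for lines through (1,0), that g_(X,w) is contained
   in the tangent space; the reverse inclusion comes from the linear
   equations defining the stabilizer. *)

Section ComposeWithPolyCurve.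
Variables (K : fieldType) (N : nat) (h : 'I_N -> {poly K}).

Definition mcomp_poly (f : {mpoly K[N]}) : {poly K} := mmap (@polyC K) h f.

Lemma horner_mcomp_poly f t : (mcomp_poly f).[t] = f.@[fun i => (h i).[t]].
Proof.
rewrite /mcomp_poly /meval /mmap horner_sum; apply: eq_bigr => m _.
rewrite hornerM hornerC /mmap1 horner_prod; congr (_ * _).
by apply: eq_bigr => i _; rewrite horner_exp.
Qed.

Lemma deriv_mcomp_poly f :
  (mcomp_poly f)^`() = \sum_i mcomp_poly f^`M(i) * (h i)^`().
Proof.
pose chain f := (mcomp_poly f)^`() = \sum_i mcomp_poly f^`M(i) * (h i)^`().
have chainD f1 f2 : chain f1 -> chain f2 -> chain (f1 + f2).
  rewrite /chain /mcomp_poly => E1 E2; rewrite mmapD derivD E1 E2 -big_split.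
  by apply: eq_bigr => i _; rewrite mderivD mmapD mulrDl.
have chainM f1 f2 : chain f1 -> chain f2 -> chain (f1 * f2).
  rewrite /chain /mcomp_poly => E1 E2; rewrite rmorphM derivM E1 E2 /=.
  rewrite mulr_suml mulr_sumr -big_split; apply: eq_bigr => i _ /=.
  rewrite mderivM mmapD !rmorphM /= mulrDl -!mulrA.
  by congr (_ + _); congr (_ * _); rewrite mulrC.
have chainC c : chain c%:MP.
  rewrite /chain /mcomp_poly mmapC derivC big1 // => i _.
  by rewrite mderivC mmap0 mul0r.
have chainX i : chain 'X_i.
  rewrite /chain /mcomp_poly mmapX mmap1U (bigD1 i) //= big1 ?addr0 => [|j ji].
    rewrite mderivX mnm1E eqxx mulr1n scale1r.
    have -> : (U_(i) - U_(i) = 0)%MM by apply/mnmP => j; rewrite mnmBE subnn mnm0E.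
    by rewrite mmapX mmap11 mul1r.
  by rewrite mderivX mnm1E eq_sym (negbTE ji) mulr0n scale0r mmap0 mul0r.
have chain1 : chain 1 by rewrite -(rmorph1 (@mpolyC N K)); apply: chainC.
rewrite -/(chain f) (mpolyE f); apply: (big_ind chain) => [||m _].
- by rewrite -(raddf0 (@mpolyC N K)); apply: chainC.
- exact: chainD.
rewrite -mul_mpolyC; apply: (chainM) => //; rewrite mpolyXE_id.
apply: (big_ind chain chain1 chainM) => i _.
by elim: (m i) => [|k IHk]; rewrite ?expr0 ?exprS //; apply: chainM.
Qed.

End ComposeWithPolyCurve.

Section PolyOverClosedField.
Variable K : closedFieldType.

Lemma poly0_off_roots (Q P : {poly K}) :
  Q != 0 -> (forall t, Q.[t] != 0 -> P.[t] = 0) -> P = 0.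
Proof.
move=> Q_neq0 PQ; apply/eqP/negPn/negP => P_neq0.
have /closed_nonrootP [t] : Q * P != 0 by rewrite mulf_neq0.
rewrite /root hornerM mulf_eq0 negb_or => /andP [Qt].
by rewrite PQ ?eqxx.
Qed.

Lemma deriv0_linear_poly (P : {poly K}) c :
  (forall t, P.[t] = c * t) -> P^`().[0] = c.
Proof.
move=> Pt; have -> : P = c%:P * 'X.
  apply/eqP; rewrite -subr_eq0; apply/eqP.
  apply: (@poly0_off_roots 1) => [|t _]; first exact: oner_neq0.
  by rewrite hornerD hornerN hornerM hornerC hornerX Pt subrr.
by rewrite derivM derivC derivX mul0r add0r mulr1 hornerC.
Qed.

End PolyOverClosedField.

Section LinesInAffineSpace.
Variables (K : closedFieldType) (n : nat).
Local Notation N := (n * n + n)%N.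
Local Notation pairT := ('M[K]_n * 'cV[K]_n)%type.

Lemma coord_line (a b : pairT) t i :
  coord (a + t *: b) i = coord a i + t * coord b i.
Proof. by rewrite /coord; case: split => k; rewrite ?linearD ?linearZ !mxE. Qed.

Definition line_poly (a b : pairT) (f : {mpoly K[N]}) : {poly K} :=
  mcomp_poly (fun i => (coord a i)%:P + (coord b i)%:P * 'X) f.

Lemma horner_line_poly a b f t : (line_poly a b f).[t] = f.@[coord (a + t *: b)].
Proof.
rewrite horner_mcomp_poly; apply: meval_eq => i.
by rewrite coord_line hornerD hornerM hornerX !hornerC mulrC.
Qed.

Lemma deriv_line_poly0 a b f :
  (line_poly a b f)^`().[0] = \sum_(i < N) (f^`M(i)).@[coord a] * coord b i.
Proof.
rewrite deriv_mcomp_poly horner_sum; apply: eq_bigr => i _.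
rewrite hornerM derivD derivC derivM derivC derivX mul0r !add0r mulr1 hornerC.
rewrite horner_mcomp_poly; congr (_ * _); apply: meval_eq => j.
by rewrite hornerD hornerM hornerX !hornerC mulr0 addr0.
Qed.

Definition generic_line (S : pairT -> Prop) (a b : pairT) : Prop :=
  exists2 Q : {poly K}, Q != 0 & forall t, Q.[t] != 0 -> S (a + t *: b).

Lemma line_poly0 S a b f :
  generic_line S a b -> vanishing S f -> line_poly a b f = 0.
Proof.
move=> [Q Q_neq0 SQ] Sf; apply: (poly0_off_roots Q_neq0) => t Qt.
by rewrite horner_line_poly; apply/Sf/SQ.
Qed.

Lemma tangent_generic_line S a b : generic_line S a b -> tangent S a b.
Proof.
by move=> Sab f Sf; rewrite -deriv_line_poly0 (line_poly0 Sab Sf) deriv0 horner0.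
Qed.

Lemma tangent_linear_eqn S (a b : pairT) f c : tangent S a b -> vanishing S f ->
  (forall t, f.@[coord (a + t *: b)] = c * t) -> c = 0.
Proof.
move=> Tab Sf ft; rewrite -(Tab f Sf) -deriv_line_poly0.
by apply/esym/deriv0_linear_poly => t; rewrite horner_line_poly.
Qed.

Lemma zconnected_generic_lines S :
  (forall p q, S p -> S q -> generic_line S p (q - p)) -> zconnected S.
Proof.
move=> Slines A B [FA defA] [FB defB] SAB disjAB.
apply: NNPP => /not_or_and [/not_all_ex_not [p /NNPP Ap]].
move=> /not_all_ex_not [q /NNPP Bq].
have [Sp Sq] : S p /\ S q by split; apply/SAB; [left | right].
have [Q Q_neq0 SQ] := Slines p q Sp Sq.
have p_at0 : p + 0 *: (q - p) = p by rewrite scale0r addr0.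
have q_at1 : p + 1 *: (q - p) = q by rewrite scale1r addrC subrK.
have [fA [FAfA fA_neq0]] : exists f, FA f /\ line_poly p (q - p) f != 0.
  apply: NNPP => noA; apply: (disjAB q); split => //.
  apply/defA; split => // f FAf; rewrite -q_at1 -horner_line_poly.
  have [-> | ?] := eqVneq (line_poly p (q - p) f) 0; first by rewrite horner0.
  by case: noA; exists f.
have [fB [FBfB fB_neq0]] : exists f, FB f /\ line_poly p (q - p) f != 0.
  apply: NNPP => noB; apply: (disjAB p); split => //.
  apply/defB; split => // f FBf; rewrite -p_at0 -horner_line_poly.
  have [-> | ?] := eqVneq (line_poly p (q - p) f) 0; first by rewrite horner0.
  by case: noB; exists f.
have /closed_nonrootP [t] :
    Q * line_poly p (q - p) fA * line_poly p (q - p) fB != 0.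
  by rewrite !mulf_neq0.
rewrite /root !hornerM !mulf_eq0 !negb_or => /andP [/andP [Qt fAt] fBt].
case/SAB: (SQ t Qt) => [/defA [_ AfA] | /defB [_ BfB]].
  by rewrite horner_line_poly AfA ?eqxx in fAt.
by rewrite horner_line_poly BfB ?eqxx in fBt.
Qed.

End LinesInAffineSpace.

Section BracketLinear.
Variables (K : fieldType) (n : nat) (Xw : 'M[K]_n * 'cV[K]_n).

Lemma bracketu_is_linear : linear (bracketu Xw).
Proof.
move=> t a b; rewrite /bracketu /= !mulmxDr !mulmxDl -!scalemxAr -!scalemxAl.
by congr pair; rewrite /= scalerBr opprD addrACA.
Qed.

HB.instance Definition _ :=
  GRing.isLinear.Build K _ _ _ (bracketu Xw) bracketu_is_linear.

Lemma centu0 : centu Xw 0.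
Proof. exact: linear0. Qed.

Lemma centu_line a b t : centu Xw a -> centu Xw b -> centu Xw (a + t *: b).
Proof. by move=> ca cb; rewrite /centu linearD linearZ /= ca cb scaler0 addr0. Qed.

Lemma centuB a b : centu Xw a -> centu Xw b -> centu Xw (a - b).
Proof. by move=> ca cb; rewrite /centu linearB /= ca cb subr0. Qed.

End BracketLinear.

Section DetPencil.
Variables (K : fieldType) (n : nat).

Definition det_pencil (A B : 'M[K]_n) : {poly K} :=
  \det (\matrix_(i, j) ((A i j)%:P + (B i j)%:P * 'X)).

Lemma horner_det_pencil A B t : (det_pencil A B).[t] = \det (A + t *: B).
Proof.
rewrite /det_pencil -horner_evalE -det_map_mx; congr (\det _).
apply/matrixP => i j.
by rewrite !mxE /= horner_evalE hornerD hornerM hornerX !hornerC mulrC.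
Qed.

Lemma det_pencil_neq0 A B : A \in unitmx -> det_pencil A B != 0.
Proof.
apply: contraL => /eqP pencil0; have := horner_det_pencil A B 0.
by rewrite pencil0 horner0 scale0r addr0 unitmxE unitfE => <-; rewrite eqxx.
Qed.

End DetPencil.

Section Stabilizer.
Variables (K : fieldType) (n : nat) (X : 'M[K]_n) (w : 'cV[K]_n).
Local Notation pairT := ('M[K]_n * 'cV[K]_n)%type.
Local Notation one := ((1%:M, 0) : pairT).

Lemma stabuE p : stabu (X, w) p <-> p.1 \in unitmx /\ centu (X, w) (p - one).
Proof.
case: p => g v; rewrite /stabu /in_Gu /Adu /centu /bracketu /=.
rewrite subr0 mulmxBr !mulmxBl mulmx1 !mul1mx opprB addrA subrK !pair_equal_spec.
have commE : g \in unitmx -> g *m X *m invmx g = X <-> X *m g - g *m X = 0.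
  move=> gu; split => [E | /subr0_eq E]; last by rewrite -E mulmxK.
  by rewrite -{1}E mulmxKV // subrr.
have vecE a b c : - a + b = c <-> a - (b - c) = 0 :> 'cV[K]_n.
  split=> [<- | /subr0_eq ->]; last by rewrite opprB subrK.
  by rewrite [- a + b]addrC subKr subrr.
split=> -[gu [E1 E2]]; do !split => //; try exact/commE.
  by rewrite E1 in E2; apply: (vecE _ _ _).1.
by rewrite ((commE gu).2 E1); apply: (vecE _ _ _).2.
Qed.

Lemma stabu1 : stabu (X, w) one.
Proof. by apply/stabuE; rewrite unitmx1 subrr; split=> //; apply: centu0. Qed.

End Stabilizer.

Section StabilizerGeometry.
Variables (K : closedFieldType) (n : nat) (X : 'M[K]_n) (w : 'cV[K]_n).
Local Notation N := (n * n + n)%N.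
Local Notation pairT := ('M[K]_n * 'cV[K]_n)%type.
Local Notation one := ((1%:M, 0) : pairT).

Lemma stabu_generic_line p b :
  stabu (X, w) p -> centu (X, w) b -> generic_line (stabu (X, w)) p b.
Proof.
move=> /stabuE [pu cp] cb; exists (det_pencil p.1 b.1); first exact: det_pencil_neq0.
move=> t; rewrite horner_det_pencil -unitfE -unitmxE => ut.
by apply/stabuE; split=> //; rewrite addrAC; apply: centu_line.
Qed.

Lemma stabu_zconnected : zconnected (stabu (X, w)).
Proof.
apply: zconnected_generic_lines => p q Sp Sq; apply: stabu_generic_line => //.
move: Sp Sq => /stabuE [_ cp] /stabuE [_ cq].
have -> : q - p = (q - one) - (p - one) by rewrite opprB addrA subrK.
exact: centuB.
Qed.

Lemma centu_sub_Lie b : centu (X, w) b -> Lie_sub (stabu (X, w)) b.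
Proof. by move=> cb; apply/tangent_generic_line/stabu_generic_line/cb/stabu1. Qed.

Definition mx_var i j : {mpoly K[N]} := 'X_(lshift n (mxvec_index i j)).
Definition cv_var i : {mpoly K[N]} := 'X_(rshift (n * n) i).

Lemma meval_mx_var (p : pairT) i j : (mx_var i j).@[coord p] = p.1 i j.
Proof.
by rewrite mevalXU /coord (unsplitK (inl _ : 'I_(n * n) + 'I_n)) mxvecE.
Qed.

Lemma meval_cv_var (p : pairT) i : (cv_var i).@[coord p] = p.2 i 0.
Proof. by rewrite mevalXU /coord (unsplitK (inr _ : 'I_(n * n) + 'I_n)). Qed.

Definition stab_eqn_mx i j : {mpoly K[N]} :=
  \sum_k ((X i k)%:MP * mx_var k j - mx_var i k * (X k j)%:MP).

Definition stab_eqn_cv i : {mpoly K[N]} :=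
  \sum_k ((X i k)%:MP * cv_var k - mx_var i k * (w k 0)%:MP) + (w i 0)%:MP.

Lemma meval_stab_eqn_mx p i j :
  (stab_eqn_mx i j).@[coord p] = (bracketu (X, w) (p - one)).1 i j.
Proof.
rewrite /bracketu /= mulmxBr mulmxBl mulmx1 mul1mx opprB addrA subrK.
rewrite !mxE -sumrB raddf_sum; apply: eq_bigr => k _.
by rewrite raddfB /= !rmorphM /= !mevalC !meval_mx_var.
Qed.

Lemma meval_stab_eqn_cv p i :
  (stab_eqn_cv i).@[coord p] = (bracketu (X, w) (p - one)).2 i 0.
Proof.
rewrite /bracketu /= subr0 mulmxBl mul1mx opprB addrA !mxE addrAC -sumrB.
rewrite raddfD /= mevalC raddf_sum; congr (_ + _); apply: eq_bigr => k _.
by rewrite raddfB /= !rmorphM /= !mevalC meval_mx_var meval_cv_var.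
Qed.

Lemma Lie_sub_centu b : Lie_sub (stabu (X, w)) b -> centu (X, w) b.
Proof.
move=> Tb.
have eqn_line t : bracketu (X, w) (one + t *: b - one) = t *: bracketu (X, w) b.
  by rewrite addrAC subrr add0r linearZ.
have entry_eq0 f (entry : pairT -> K) :
    (forall p, f.@[coord p] = entry (bracketu (X, w) (p - one))) ->
    (forall t P, entry (t *: P) = t * entry P) -> entry (bracketu (X, w) b) = 0.
  move=> fE entryZ.
  apply: (tangent_linear_eqn (f := f) Tb) => [p /stabuE [_ cp] | t].
    by rewrite fE cp -(scale0r (0 : pairT)) entryZ mul0r.
  by rewrite fE eqn_line entryZ mulrC.
have mx_eq0 i j : (bracketu (X, w) b).1 i j = 0.
  apply: (entry_eq0 (stab_eqn_mx i j) (fun P => P.1 i j)) => [p | t P].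
    exact: meval_stab_eqn_mx.
  by rewrite mxE.
have cv_eq0 i : (bracketu (X, w) b).2 i 0 = 0.
  apply: (entry_eq0 (stab_eqn_cv i) (fun P => P.2 i 0)) => [p | t P].
    exact: meval_stab_eqn_cv.
  by rewrite mxE.
rewrite /centu; case: (bracketu (X, w) b) mx_eq0 cv_eq0 => B u /= B0 u0.
by congr pair; apply/matrixP => i j; rewrite mxE ?B0 // (ord1 j) u0.
Qed.

End StabilizerGeometry.

Unset Implicit Arguments.

Theorem lemma1p1 (K : closedFieldType) (n : nat) (X : 'M[K]_n) (w : 'cV[K]_n) :
  nilpotent_mx X ->
  (forall Yu : 'M[K]_n * 'cV[K]_n,
      centu (X, w) Yu <-> Lie_sub (stabu (X, w)) Yu)
  /\ zconnected (stabu (X, w)).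
Proof.
move=> _; split; last exact: stabu_zconnected.
by move=> Yu; split; [apply: centu_sub_Lie | apply: Lie_sub_centu].
Qed.
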